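(* With the notation of the context, for every $v\in V$, $$\kappa_A(v)+\kappa_B(\phi(v))\ \le\ L-1+\frac2N.$$
   Context: Let $A,B$ be groups, $L\ge1$, $a_1,\dots,a_L\in A\setminus\{1\}$, $b_1,\dots,b_L\in B\setminus\{1\}$. Let $N\in\{2,3,\dots\}\cup\{\infty\}$ be the minimum of the orders of $a_1,\dots,a_L,b_1,\dots,b_L$ (convention $1/\infty=0$). Let $W$ be the real vector space with basis the formal symbols $(i,j)$, $1\le i,j\le L$. Let $V=\{\sum_{i,j}x_{ij}(i,j): x_{ij}\ge0,\ \sum_i x_{ij}=1 \text{ for all } j,\ \sum_j x_{ij}=1\text{ for all } i\}$. A disk vector in $A$ is an element of $W$ of the form $\sum_{j=1}^k (i_j,i_{j+1})$ with $k\ge1$, indices $i_1,\dots,i_k\in\{1,\dots,L\}$, $i_{k+1}=i_1$, and $a_{i_1}a_{i_2}\cdots a_{i_k}=1$ in $A$; let $\mathcal D_A$ be the set of disk vectors in $A$, and define $\mathcal D_B$ analogously using the $b_i$. For $v\in V$ set $\kappa_A(v)=\sup\{\sum_s t_s : v=\sum_s t_s d_s+\sum_{i,j}x'_{ij}(i,j),\ t_s\ge0,\ d_s\in\mathcal D_A,\ x'_{ij}\ge 0\}$ (finite sums), and define $\kappa_B$ analogously with $\mathcal D_B$. Let $\phi:V\to V$ be the map $\phi(\sum_{i,j}x_{ij}(i,j))=\sum_{i,j}x_{ij}(j-1,i)$, where $j-1$ is read as $L$ when $j=1$. *)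

From Stdlib Require Import Reals Lra Lia List Arith Classical ClassicalEpsilon ClassicalDescription.
Import ListNotations.
Open Scope R_scope.

Record Group := {
  carrier :> Type;
  gmul : carrier -> carrier -> carrier;
  gone : carrier;
  ginv : carrier -> carrier;
  gmul_assoc : forall x y z, gmul x (gmul y z) = gmul (gmul x y) z;
  gmul_one_l : forall x, gmul gone x = x;
  gmul_one_r : forall x, gmul x gone = x;
  gmul_inv_l : forall x, gmul (ginv x) x = gone;
  gmul_inv_r : forall x, gmul x (ginv x) = gone
}.

Fixpoint gpow (G : Group) (g : G) (n : nat) : G :=
  match n with O => gone G | S m => gmul G g (gpow G g m) end.

Definition has_order (G : Group) (g : G) (n : nat) : Prop :=
  (0 < n)%nat /\ gpow G g n = gone G /\
  forall m, (0 < m < n)%nat -> gpow G g m <> gone G.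

(* order of g in {1,2,...} ∪ {∞}; None encodes ∞ *)
Definition order (G : Group) (g : G) : option nat :=
  match excluded_middle_informative (exists n, has_order G g n) with
  | left H => Some (proj1_sig (constructive_indefinite_description _ H))
  | right _ => None
  end.

(* minimum in nat ∪ {∞} (None = ∞) *)
Definition minO (x y : option nat) : option nat :=
  match x, y with
  | None, _ => y
  | _, None => x
  | Some m, Some n => Some (Nat.min m n)
  end.

(* 1/N with the convention 1/∞ = 0 *)
Definition recipN (x : option nat) : R :=
  match x with None => 0 | Some n => 1 / INR n end.

Definition Nmin (A B : Group) (L : nat) (a : nat -> A) (b : nat -> B) : option nat :=
  fold_right minO None
    (map (fun i => order A (a i)) (seq 1 L) ++ map (fun i => order B (b i)) (seq 1 L)).

Definition sumL (L : nat) (f : nat -> R) : R := fold_right Rplus 0 (map f (seq 1 L)).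

Definition inRange (L i : nat) : Prop := (1 <= i <= L)%nat.

(* vectors of W are represented by coefficient functions x i j on 1<=i,j<=L *)
Definition in_V (L : nat) (x : nat -> nat -> R) : Prop :=
  (forall i j, inRange L i -> inRange L j -> 0 <= x i j) /\
  (forall j, inRange L j -> sumL L (fun i => x i j) = 1) /\
  (forall i, inRange L i -> sumL L (fun j => x i j) = 1).

(* phi(sum x_ij (i,j)) = sum x_ij (j-1, i), with j-1 read as L when j = 1;
   so the coefficient of (p,q) in phi(x) is x_{q, p+1} (p+1 read as 1 when p = L). *)
Definition succL (L p : nat) : nat := if Nat.eqb p L then 1%nat else S p.
Definition phi (L : nat) (x : nat -> nat -> R) : nat -> nat -> R :=
  fun p q => x q (succL L p).

Definition gprod (G : Group) (a : nat -> G) (ks : list nat) : G :=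
  fold_right (fun i acc => gmul G (a i) acc) (gone G) ks.

Definition cyc_pairs (ks : list nat) : list (nat * nat) :=
  match ks with
  | [] => []
  | k0 :: rest => combine ks (rest ++ [k0])
  end.

(* coefficient of (i,j) in the vector sum_{s=1}^k (i_s, i_{s+1}) *)
Definition dvec (ks : list nat) (i j : nat) : R :=
  INR (length (filter (fun p => andb (Nat.eqb (fst p) i) (Nat.eqb (snd p) j)) (cyc_pairs ks))).

(* ks = [i_1;...;i_k] determines a disk vector in G (w.r.t. a_1..a_L) *)
Definition is_disk (G : Group) (L : nat) (a : nat -> G) (ks : list nat) : Prop :=
  ks <> [] /\ Forall (inRange L) ks /\ gprod G a ks = gone G.

(* values sum_s t_s over decompositions v = sum_s t_s d_s + sum x'_ij (i,j) *)
Definition kappa_set (G : Group) (L : nat) (a : nat -> G) (v : nat -> nat -> R) (r : R) : Prop :=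
  exists ds : list (R * list nat),
    (forall p, In p ds -> 0 <= fst p /\ is_disk G L a (snd p)) /\
    r = fold_right Rplus 0 (map fst ds) /\
    exists x' : nat -> nat -> R,
      (forall i j, inRange L i -> inRange L j -> 0 <= x' i j) /\
      (forall i j, inRange L i -> inRange L j ->
         v i j = fold_right Rplus 0 (map (fun p => fst p * dvec (snd p) i j) ds) + x' i j).

(* supremum of a set of reals (least upper bound; 0 if none exists) *)
Definition Rsup (E : R -> Prop) : R :=
  match excluded_middle_informative (exists l, is_lub E l) with
  | left H => proj1_sig (constructive_indefinite_description _ H)
  | right _ => 0
  end.

Definition kappa (G : Group) (L : nat) (a : nat -> G) (v : nat -> nat -> R) : R :=
  Rsup (kappa_set G L a v).

From Stdlib Require Import Reals List Lra Lia Arith Classical ClassicalEpsilon ClassicalDescription.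
Import ListNotations.
Open Scope R_scope.

(* kappa_A(v) is the value of a covering linear program, so it is bounded by
   <W, v> for every weight W >= 0 with <W, d> >= 1 on all disk vectors d.  A
   disk vector is a closed walk on {1..L}: either it stays at one index i, and
   then a_i^k = 1 forces k >= N, or it has both an ascending and a descending
   step.  Hence, with r = 1/N <= 1/2, two admissible weights are "r on the
   diagonal, 1/2 elsewhere" and "r on the diagonal, 1 strictly above, 0 below".
   They give kappa_A(v) <= L/2 + (r - 1/2) tr v and kappa_A(v) <= r tr v + up v,
   where up v is the strictly upper triangular mass, and the same for kappa_B
   at phi v.  Since up v + up (phi v) = L - 1, adding the first bounds when
   tr v + tr (phi v) >= 2 and the second ones otherwise gives the theorem. *)

Lemma fold_Rplus_init (l : list R) c : fold_right Rplus c l = fold_right Rplus 0 l + c.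
Proof. induction l as [|x l IH]; simpl; [lra | rewrite IH; lra]. Qed.

Lemma sumL_O f : sumL 0 f = 0.
Proof. reflexivity. Qed.

Lemma sumL_S L f : sumL (S L) f = sumL L f + f (S L).
Proof.
  unfold sumL. rewrite seq_S, map_app, fold_right_app. simpl.
  rewrite fold_Rplus_init. replace (1 + L)%nat with (S L) by lia. lra.
Qed.

Lemma sumL_ext L f g : (forall i, inRange L i -> f i = g i) -> sumL L f = sumL L g.
Proof.
  induction L as [|L IH]; intros H; [reflexivity|]. rewrite !sumL_S.
  rewrite IH by (intros i Hi; apply H; red in Hi |- *; lia).
  rewrite H by (red; lia). reflexivity.
Qed.

Lemma sumL_le L f g : (forall i, inRange L i -> f i <= g i) -> sumL L f <= sumL L g.
Proof.
  induction L as [|L IH]; intros H; [rewrite !sumL_O; lra|]. rewrite !sumL_S.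
  assert (sumL L f <= sumL L g) by (apply IH; intros i Hi; apply H; red in Hi |- *; lia).
  assert (f (S L) <= g (S L)) by (apply H; red; lia). lra.
Qed.

Lemma sumL_plus L f g : sumL L (fun i => f i + g i) = sumL L f + sumL L g.
Proof. induction L as [|L IH]; [rewrite !sumL_O; lra|]. rewrite !sumL_S, IH; lra. Qed.

Lemma sumL_mult_l L c f : sumL L (fun i => c * f i) = c * sumL L f.
Proof. induction L as [|L IH]; [rewrite !sumL_O; lra|]. rewrite !sumL_S, IH; lra. Qed.

Lemma sumL_const L c : sumL L (fun _ => c) = INR L * c.
Proof. induction L as [|L IH]; [rewrite sumL_O; simpl; lra|]. rewrite sumL_S, IH, S_INR; lra. Qed.

Lemma sumL_zero L : sumL L (fun _ => 0) = 0.
Proof. rewrite sumL_const; lra. Qed.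

Lemma sumL_nonneg L f : (forall i, inRange L i -> 0 <= f i) -> 0 <= sumL L f.
Proof. intros H. rewrite <- (sumL_zero L). now apply sumL_le. Qed.

Lemma sumL_delta L i f : inRange L i ->
  sumL L (fun j => if Nat.eqb i j then f j else 0) = f i.
Proof.
  induction L as [|L IH]; intros Hi; red in Hi; [lia|]. rewrite sumL_S.
  destruct (Nat.eq_dec i (S L)) as [->|Hne].
  - rewrite Nat.eqb_refl, (sumL_ext L _ (fun _ => 0)), sumL_zero; [lra|].
    intros j Hj. red in Hj. destruct (Nat.eqb_spec (S L) j); [lia | reflexivity].
  - rewrite IH by (red; lia). destruct (Nat.eqb_spec i (S L)); [lia | lra].
Qed.

Lemma sumL_comm L M f :
  sumL L (fun i => sumL M (fun j => f i j)) = sumL M (fun j => sumL L (fun i => f i j)).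
Proof.
  induction L as [|L IH].
  - rewrite sumL_O, (sumL_ext M _ (fun _ => 0)) by (intros; apply sumL_O). now rewrite sumL_zero.
  - rewrite sumL_S, IH, <- sumL_plus. apply sumL_ext. intros. now rewrite sumL_S.
Qed.

Lemma sumL_shift L f : sumL L (fun i => f (S i)) + f 1%nat = sumL L f + f (S L).
Proof. induction L as [|L IH]; [rewrite !sumL_O; lra|]. rewrite !sumL_S. lra. Qed.

Definition sumL2 (L : nat) (f : nat -> nat -> R) : R := sumL L (fun i => sumL L (fun j => f i j)).

Lemma sumL2_ext L f g :
  (forall i j, inRange L i -> inRange L j -> f i j = g i j) -> sumL2 L f = sumL2 L g.
Proof. intros H. apply sumL_ext; intros. apply sumL_ext; intros. now apply H. Qed.

Lemma sumL2_le L f g :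
  (forall i j, inRange L i -> inRange L j -> f i j <= g i j) -> sumL2 L f <= sumL2 L g.
Proof. intros H. apply sumL_le; intros. apply sumL_le; intros. now apply H. Qed.

Lemma sumL2_plus L f g : sumL2 L (fun i j => f i j + g i j) = sumL2 L f + sumL2 L g.
Proof. unfold sumL2. rewrite <- sumL_plus. apply sumL_ext; intros. apply sumL_plus. Qed.

Lemma sumL2_mult_l L c f : sumL2 L (fun i j => c * f i j) = c * sumL2 L f.
Proof. unfold sumL2. rewrite <- sumL_mult_l. apply sumL_ext; intros. apply sumL_mult_l. Qed.

Lemma sumL2_zero L : sumL2 L (fun _ _ => 0) = 0.
Proof. unfold sumL2. rewrite (sumL_ext L _ (fun _ => 0)) by (intros; apply sumL_zero). apply sumL_zero. Qed.

Lemma sumL2_nonneg L f :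
  (forall i j, inRange L i -> inRange L j -> 0 <= f i j) -> 0 <= sumL2 L f.
Proof. intros H. rewrite <- (sumL2_zero L). now apply sumL2_le. Qed.

Lemma has_order_of_gpow (G : Group) (g : G) k :
  (0 < k)%nat -> gpow G g k = gone G -> exists n, has_order G g n.
Proof.
  induction k as [k IH] using lt_wf_ind. intros Hk Hg.
  destruct (classic (exists m, (0 < m < k)%nat /\ gpow G g m = gone G)) as [[m [Hm Hgm]]|Hmin].
  - apply (IH m); [lia | lia | exact Hgm].
  - exists k. repeat split; [lia | exact Hg |]. intros m Hm Hgm. apply Hmin; eauto.
Qed.

Lemma order_Some (G : Group) (g : G) n : order G g = Some n -> has_order G g n.
Proof.
  unfold order. destruct (excluded_middle_informative _) as [H|]; [|discriminate].
  intros E. injection E as <-. exact (proj2_sig (constructive_indefinite_description _ H)).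
Qed.

Lemma order_le_of_gpow (G : Group) (g : G) k :
  (0 < k)%nat -> gpow G g k = gone G -> exists n, order G g = Some n /\ (n <= k)%nat.
Proof.
  intros Hk Hg. pose proof (has_order_of_gpow G g k Hk Hg) as Hex.
  assert (Hord : exists n, order G g = Some n).
  { unfold order. destruct (excluded_middle_informative _); [eauto | contradiction]. }
  destruct Hord as [n Hn]. exists n. split; [exact Hn|].
  destruct (order_Some G g n Hn) as [_ [_ Hless]].
  destruct (le_lt_dec n k) as [|Hlt]; [assumption|]. exfalso. apply (Hless k); [lia | exact Hg].
Qed.

Lemma has_order_ge2 (G : Group) (g : G) n : g <> gone G -> has_order G g n -> (2 <= n)%nat.
Proof.
  intros Hg [Hn [Hgn _]]. destruct n as [|[|n]]; [lia | | lia].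
  simpl in Hgn. rewrite gmul_one_r in Hgn. contradiction.
Qed.

Lemma fold_minO_In (l : list (option nat)) n : fold_right minO None l = Some n -> In (Some n) l.
Proof.
  revert n. induction l as [|[k|] l IH]; intros n; simpl; [discriminate| |].
  - destruct (fold_right minO None l) as [j|]; simpl; intros H; injection H as <-; [|auto].
    destruct (Nat.min_spec k j) as [[_ ->]|[_ ->]]; auto.
  - intros H. right. apply IH. destruct (fold_right minO None l); [exact H | discriminate].
Qed.

Lemma fold_minO_le (l : list (option nat)) n : In (Some n) l ->
  exists m, fold_right minO None l = Some m /\ (m <= n)%nat.
Proof.
  induction l as [|h l IH]; simpl; [tauto|]. intros [->|Hin].
  - destruct (fold_right minO None l) as [k|]; simpl; eexists; split; try reflexivity; lia.
  - destruct (IH Hin) as [m [-> Hle]].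
    destruct h as [k|]; simpl; eexists; split; try reflexivity; lia.
Qed.

Lemma recipN_fold_minO_le_half (l : list (option nat)) :
  (forall n, In (Some n) l -> (2 <= n)%nat) -> 0 <= recipN (fold_right minO None l) <= 1/2.
Proof.
  intros H2. destruct (fold_right minO None l) as [n|] eqn:E; simpl; [|lra].
  apply fold_minO_In, H2, le_INR in E. simpl in E.
  split; [apply Rlt_le, Rdiv_lt_0_compat; lra|].
  apply (Rmult_le_reg_r (INR n)); [lra|]. field_simplify; lra.
Qed.

Lemma one_le_mul_recipN_fold_minO (l : list (option nat)) n k :
  (forall m, In (Some m) l -> (0 < m)%nat) -> In (Some n) l -> (n <= k)%nat ->
  1 <= INR k * recipN (fold_right minO None l).
Proof.
  intros Hpos Hin Hnk. destruct (fold_minO_le l n Hin) as [m [Hm Hmn]].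
  pose proof (Hpos m (fold_minO_In l m Hm)) as Hm0. rewrite Hm. simpl.
  apply lt_INR in Hm0. assert (INR m <= INR k) by (apply le_INR; lia). simpl in Hm0.
  apply (Rmult_le_reg_r (INR m)); [lra|]. field_simplify; lra.
Qed.

Definition Nmin_orders (A B : Group) (L : nat) (a : nat -> A) (b : nat -> B) : list (option nat) :=
  map (fun i => order A (a i)) (seq 1 L) ++ map (fun i => order B (b i)) (seq 1 L).

Lemma In_Nmin_orders (A B : Group) L (a : nat -> A) (b : nat -> B) o :
  In o (Nmin_orders A B L a b) <->
  (exists i, inRange L i /\ o = order A (a i)) \/ (exists i, inRange L i /\ o = order B (b i)).
Proof.
  unfold Nmin_orders, inRange. rewrite in_app_iff, !in_map_iff.
  split; intros [[i [Hi Hin]]|[i [Hi Hin]]];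
    [left | right | left | right]; exists i; rewrite in_seq in *; split; auto; lia.
Qed.

Lemma Nmin_orders_pos (A B : Group) L (a : nat -> A) (b : nat -> B) n :
  In (Some n) (Nmin_orders A B L a b) -> (0 < n)%nat.
Proof.
  rewrite In_Nmin_orders. intros [[i [_ Hi]]|[i [_ Hi]]]; symmetry in Hi;
    now destruct (order_Some _ _ _ Hi).
Qed.

Lemma recipN_Nmin_le_half (A B : Group) L (a : nat -> A) (b : nat -> B)
  (Ha : forall i, inRange L i -> a i <> gone A)
  (Hb : forall i, inRange L i -> b i <> gone B) :
  0 <= recipN (Nmin A B L a b) <= 1/2.
Proof.
  apply recipN_fold_minO_le_half. intros n Hn.
  apply In_Nmin_orders in Hn as [[i [Hi Hn]]|[i [Hi Hn]]]; symmetry in Hn.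
  - exact (has_order_ge2 A (a i) n (Ha i Hi) (order_Some A (a i) n Hn)).
  - exact (has_order_ge2 B (b i) n (Hb i Hi) (order_Some B (b i) n Hn)).
Qed.

Lemma one_le_mul_recipN_Nmin (A B : Group) L (a : nat -> A) (b : nat -> B)
  (X : Group) (g : X) k :
  In (order X g) (Nmin_orders A B L a b) ->
  (0 < k)%nat -> gpow X g k = gone X -> 1 <= INR k * recipN (Nmin A B L a b).
Proof.
  intros Hg Hk Hgk. destruct (order_le_of_gpow X g k Hk Hgk) as [n [Hn Hnk]].
  rewrite Hn in Hg.
  apply (one_le_mul_recipN_fold_minO _ n); [apply Nmin_orders_pos | exact Hg | exact Hnk].
Qed.

Definition lsum {T : Type} (f : T -> R) (l : list T) : R := fold_right Rplus 0 (map f l).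

Lemma lsum_nonneg {T : Type} (f : T -> R) l : (forall x, In x l -> 0 <= f x) -> 0 <= lsum f l.
Proof.
  induction l as [|x l IH]; intros H; unfold lsum; simpl; [lra|].
  assert (0 <= f x) by (apply H; simpl; auto).
  assert (0 <= lsum f l) by (apply IH; intros; apply H; simpl; auto). unfold lsum in *. lra.
Qed.

Lemma lsum_ge_In {T : Type} (f : T -> R) l x :
  (forall y, In y l -> 0 <= f y) -> In x l -> f x <= lsum f l.
Proof.
  induction l as [|y l IH]; intros H Hx; [destruct Hx|]. change (f x <= f y + lsum f l).
  assert (0 <= f y) by (apply H; simpl; auto).
  assert (0 <= lsum f l) by (apply lsum_nonneg; intros; apply H; simpl; auto).
  destruct Hx as [<-|Hx]; [lra|].
  assert (f x <= lsum f l) by (apply IH; [intros; apply H; simpl; auto | exact Hx]). lra.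
Qed.

Lemma lsum_ge_In2 {T : Type} (f : T -> R) l x1 x2 :
  (forall y, In y l -> 0 <= f y) -> In x1 l -> In x2 l -> x1 <> x2 -> f x1 + f x2 <= lsum f l.
Proof.
  induction l as [|y l IH]; intros H H1 H2 Hne; [destruct H1|]. change (f x1 + f x2 <= f y + lsum f l).
  assert (0 <= f y) by (apply H; simpl; auto).
  assert (H' : forall z, In z l -> 0 <= f z) by (intros; apply H; simpl; auto).
  destruct H1 as [<-|H1], H2 as [<-|H2].
  - congruence.
  - pose proof (lsum_ge_In f l x2 H' H2). lra.
  - pose proof (lsum_ge_In f l x1 H' H1). lra.
  - pose proof (IH H' H1 H2 Hne). lra.
Qed.

Lemma In_cyc_pairs (ks : list nat) p : In p (cyc_pairs ks) -> In (fst p) ks /\ In (snd p) ks.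
Proof.
  destruct ks as [|k ks]; [destruct 1|]. destruct p as [i j].
  change (In (i, j) (combine (k :: ks) (ks ++ [k])) -> In i (k :: ks) /\ In j (k :: ks)).
  intros Hp.
  split; [exact (in_combine_l _ _ _ _ Hp)|].
  apply in_combine_r, in_app_or in Hp as [Hp|[<-|[]]]; simpl; auto.
Qed.

Lemma combine_chain_bounds {T : Type} (Rel : T -> T -> Prop)
  (Rel_trans : forall x y z, Rel x y -> Rel y z -> Rel x z) :
  forall l x z, (forall p, In p (combine (x :: l) (l ++ [z])) -> Rel (fst p) (snd p)) ->
  Rel x z /\ forall y, In y l -> Rel x y /\ Rel y z.
Proof.
  induction l as [|y l IH]; intros x z H.
  - split; [apply (H (x, z)); simpl; auto | simpl; tauto].
  - assert (Hxy : Rel x y) by (apply (H (x, y)); simpl; auto).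
    destruct (IH y z) as [Hyz Hl]; [intros p Hp; apply H; simpl; auto|].
    split; [eauto|]. intros w [<-|Hw]; [auto|]. destruct (Hl w Hw). eauto.
Qed.

Lemma closed_walk_cases x l :
  (forall y, In y l -> y = x) \/
  ((exists p, In p (cyc_pairs (x :: l)) /\ (fst p < snd p)%nat) /\
   (exists p, In p (cyc_pairs (x :: l)) /\ (snd p < fst p)%nat)).
Proof.
  change (cyc_pairs (x :: l)) with (combine (x :: l) (l ++ [x])).
  destruct (classic (exists p, In p (combine (x :: l) (l ++ [x])) /\ (fst p < snd p)%nat)) as [Hup|Hup];
  [destruct (classic (exists p, In p (combine (x :: l) (l ++ [x])) /\ (snd p < fst p)%nat)) as [Hdn|Hdn];
   [right; tauto|]|]; left.
  - destruct (combine_chain_bounds le Nat.le_trans l x x) as [_ Hl].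
    + intros p Hp. apply Nat.nlt_ge. intros Hlt. apply Hdn. eauto.
    + intros y Hy. specialize (Hl y Hy). lia.
  - destruct (combine_chain_bounds ge (fun x y z H1 H2 => Nat.le_trans z y x H2 H1) l x x) as [_ Hl].
    + intros p Hp. apply Nat.nlt_ge. intros Hlt. apply Hup. eauto.
    + intros y Hy. specialize (Hl y Hy). lia.
Qed.

Lemma gprod_const_walk (G : Group) (a : nat -> G) x l : (forall y, In y l -> y = x) ->
  gprod G a (x :: l) = gpow G (a x) (S (length l)).
Proof.
  intros H. simpl. f_equal. induction l as [|y l IH]; [reflexivity|].
  rewrite (H y) by (simpl; auto). simpl. f_equal. apply IH. intros; apply H; simpl; auto.
Qed.

Lemma lsum_cyc_pairs_const_walk (W : nat -> nat -> R) x l : (forall y, In y l -> y = x) ->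
  lsum (fun p => W (fst p) (snd p)) (cyc_pairs (x :: l)) = INR (S (length l)) * W x x.
Proof.
  change (cyc_pairs (x :: l)) with (combine (x :: l) (l ++ [x])).
  induction l as [|y l IH]; intros H; [unfold lsum; simpl; lra|].
  rewrite (H y) by (simpl; auto).
  change (W x x + lsum (fun p => W (fst p) (snd p)) (combine (x :: l) (l ++ [x]))
          = INR (S (length (x :: l))) * W x x).
  rewrite IH by (intros; apply H; simpl; auto). simpl length. rewrite (S_INR (S _)). lra.
Qed.

Definition pairing (L : nat) (W x : nat -> nat -> R) : R := sumL2 L (fun i j => W i j * x i j).

Lemma pairing_pair_count L W (P : list (nat * nat)) :
  (forall p, In p P -> inRange L (fst p) /\ inRange L (snd p)) ->
  pairing L W (fun i j => INR (length (filter (fun p => andb (Nat.eqb (fst p) i) (Nat.eqb (snd p) j)) P)))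
  = lsum (fun p => W (fst p) (snd p)) P.
Proof.
  induction P as [|q P IH]; intros HP.
  - unfold pairing. rewrite (sumL2_ext L _ (fun _ _ => 0)) by (intros; simpl; lra). apply sumL2_zero.
  - change (lsum _ (q :: P)) with (W (fst q) (snd q) + lsum (fun p => W (fst p) (snd p)) P).
    rewrite <- IH by (intros; apply HP; simpl; auto). unfold pairing.
    rewrite (sumL2_ext L _ (fun i j =>
        (if Nat.eqb (fst q) i then if Nat.eqb (snd q) j then W i j else 0 else 0) +
        W i j * INR (length (filter (fun p => andb (Nat.eqb (fst p) i) (Nat.eqb (snd p) j)) P)))).
    2:{ intros i j _ _. cbn [filter length].
        destruct (Nat.eqb (fst q) i), (Nat.eqb (snd q) j); cbn [andb length]; try rewrite S_INR; lra. }
    rewrite sumL2_plus. f_equal. destruct (HP q) as [Hq1 Hq2]; [simpl; auto|].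
    unfold sumL2. rewrite (sumL_ext L _ (fun i => if Nat.eqb (fst q) i then W i (snd q) else 0)).
    + exact (sumL_delta L (fst q) (fun i => W i (snd q)) Hq1).
    + intros i Hi. destruct (Nat.eqb (fst q) i); [|apply sumL_zero].
      exact (sumL_delta L (snd q) (fun j => W i j) Hq2).
Qed.

Lemma pairing_dvec L W ks : Forall (inRange L) ks ->
  pairing L W (dvec ks) = lsum (fun p => W (fst p) (snd p)) (cyc_pairs ks).
Proof.
  rewrite Forall_forall. intros Hks. apply pairing_pair_count.
  intros p Hp. destruct (In_cyc_pairs ks p Hp). auto.
Qed.

Lemma pairing_le L W x y :
  (forall i j, inRange L i -> inRange L j -> 0 <= W i j) ->
  (forall i j, inRange L i -> inRange L j -> x i j <= y i j) -> pairing L W x <= pairing L W y.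
Proof. intros HW Hxy. apply sumL2_le. intros i j Hi Hj. apply Rmult_le_compat_l; auto. Qed.

Lemma pairing_nonneg L W x :
  (forall i j, inRange L i -> inRange L j -> 0 <= W i j) ->
  (forall i j, inRange L i -> inRange L j -> 0 <= x i j) -> 0 <= pairing L W x.
Proof. intros HW Hx. apply sumL2_nonneg. intros i j Hi Hj. apply Rmult_le_pos; auto. Qed.

(* 0 <= M is needed because Rsup E is 0 when E has no least upper bound. *)
Lemma Rsup_le (E : R -> Prop) M : (forall r, E r -> r <= M) -> 0 <= M -> Rsup E <= M.
Proof.
  intros HE HM. unfold Rsup. destruct (excluded_middle_informative _) as [H|]; [|exact HM].
  destruct (constructive_indefinite_description _ H) as [l Hl]. exact (proj2 Hl M HE).
Qed.

Section Duality.

Variables (G : Group) (L : nat) (a : nat -> G) (W : nat -> nat -> R).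
Hypothesis W_nonneg : forall i j, inRange L i -> inRange L j -> 0 <= W i j.

Lemma sum_weights_le_pairing_combination (ds : list (R * list nat)) :
  (forall p, In p ds -> 0 <= fst p /\ 1 <= pairing L W (dvec (snd p))) ->
  lsum fst ds <= pairing L W (fun i j => lsum (fun p => fst p * dvec (snd p) i j) ds).
Proof.
  induction ds as [|[t ks] ds IH]; intros Hds.
  - unfold pairing, lsum. simpl. rewrite (sumL2_ext L _ (fun _ _ => 0)) by (intros; lra).
    rewrite sumL2_zero. lra.
  - destruct (Hds (t, ks)) as [Ht Hd]; [simpl; auto|]. simpl in Ht, Hd.
    assert (IH' := IH (fun p Hp => Hds p (or_intror Hp))).
    change (t + lsum fst ds <= pairing L W (fun i j => t * dvec ks i j +
              lsum (fun p => fst p * dvec (snd p) i j) ds)).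
    unfold pairing in *.
    rewrite (sumL2_ext L _ (fun i j => t * (W i j * dvec ks i j) +
               W i j * lsum (fun p => fst p * dvec (snd p) i j) ds)) by (intros; ring).
    rewrite sumL2_plus, sumL2_mult_l. nra.
Qed.

(* Weak LP duality for the program defining kappa. *)
Lemma kappa_le_pairing (x : nat -> nat -> R) :
  (forall ks, is_disk G L a ks -> 1 <= pairing L W (dvec ks)) ->
  (forall i j, inRange L i -> inRange L j -> 0 <= x i j) ->
  kappa G L a x <= pairing L W x.
Proof.
  intros Hdisk Hx. apply Rsup_le; [|now apply pairing_nonneg].
  intros r [ds [Hds [-> [x' [Hx' Hdecomp]]]]].
  eapply Rle_trans; [apply sum_weights_le_pairing_combination|].
  - intros p Hp. destruct (Hds p Hp). auto.
  - apply pairing_le; [exact W_nonneg|]. intros i j Hi Hj.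
    rewrite (Hdecomp i j Hi Hj). pose proof (Hx' i j Hi Hj). unfold lsum. lra.
Qed.

End Duality.

Definition trace (L : nat) (x : nat -> nat -> R) : R := sumL L (fun i => x i i).

Definition upper_sum (L : nat) (x : nat -> nat -> R) : R :=
  sumL2 L (fun i j => if Nat.ltb i j then x i j else 0).

Definition half_weight (r : R) (i j : nat) : R := if Nat.eqb i j then r else 1/2.

Definition upper_weight (r : R) (i j : nat) : R :=
  if Nat.eqb i j then r else if Nat.ltb i j then 1 else 0.

Lemma pairing_half_weight L r x :
  (forall i, inRange L i -> sumL L (fun j => x i j) = 1) ->
  pairing L (half_weight r) x = INR L * (1/2) + (r - 1/2) * trace L x.
Proof.
  intros Hrow. unfold pairing, sumL2, trace.
  rewrite <- sumL_mult_l, <- sumL_const, <- sumL_plus. apply sumL_ext. intros i Hi.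
  rewrite (sumL_ext L _ (fun j => 1/2 * x i j + (if Nat.eqb i j then (r - 1/2) * x i j else 0))).
  - rewrite sumL_plus, sumL_mult_l, Hrow, (sumL_delta L i (fun j => (r - 1/2) * x i j)) by exact Hi.
    lra.
  - intros j _. unfold half_weight. destruct (Nat.eqb i j); lra.
Qed.

Lemma pairing_upper_weight L r x :
  pairing L (upper_weight r) x = r * trace L x + upper_sum L x.
Proof.
  unfold pairing, upper_sum.
  rewrite (sumL2_ext L _ (fun i j => (if Nat.eqb i j then r * x i j else 0) +
                                     (if Nat.ltb i j then x i j else 0))).
  - rewrite sumL2_plus. f_equal. unfold sumL2, trace. rewrite <- sumL_mult_l.
    apply sumL_ext. intros i Hi. exact (sumL_delta L i (fun j => r * x i j) Hi).
  - intros i j _ _. unfold upper_weight.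
    destruct (Nat.eqb_spec i j) as [<-|]; [rewrite Nat.ltb_irrefl; lra|].
    destruct (Nat.ltb i j); lra.
Qed.

Section DiskWeights.

Variables (G : Group) (L : nat) (a : nat -> G) (r : R).
Hypothesis r_torsion :
  forall i k, inRange L i -> (0 < k)%nat -> gpow G (a i) k = gone G -> 1 <= INR k * r.

Lemma pairing_disk_ge1 (W : nat -> nat -> R) :
  (forall i j, inRange L i -> inRange L j -> 0 <= W i j) ->
  (forall i, W i i = r) ->
  (forall i j i' j', inRange L i -> inRange L j -> inRange L i' -> inRange L j' ->
     (i < j)%nat -> (j' < i')%nat -> 1 <= W i j + W i' j') ->
  forall ks, is_disk G L a ks -> 1 <= pairing L W (dvec ks).
Proof.
  intros W_nonneg W_diag W_turn [|x l] [Hne [Hrange Hprod]]; [congruence|].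
  rewrite pairing_dvec by exact Hrange. rewrite Forall_forall in Hrange.
  assert (Hpairs : forall p, In p (cyc_pairs (x :: l)) -> inRange L (fst p) /\ inRange L (snd p)).
  { intros p Hp. destruct (In_cyc_pairs _ p Hp). auto. }
  destruct (closed_walk_cases x l) as [Hconst|[[p1 [H1 Hup]] [p2 [H2 Hdown]]]].
  - rewrite lsum_cyc_pairs_const_walk, W_diag by exact Hconst.
    apply (r_torsion x); [apply Hrange; simpl; auto | lia |].
    rewrite <- gprod_const_walk by exact Hconst. exact Hprod.
  - destruct (Hpairs p1 H1), (Hpairs p2 H2).
    apply Rle_trans with (W (fst p1) (snd p1) + W (fst p2) (snd p2)); [now apply W_turn|].
    apply (lsum_ge_In2 (fun p => W (fst p) (snd p))); auto.
    + intros p Hp. destruct (Hpairs p Hp). auto.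
    + intros <-. lia.
Qed.

Hypothesis r_nonneg : 0 <= r.

Lemma kappa_le_half_weight x :
  (forall i j, inRange L i -> inRange L j -> 0 <= x i j) ->
  (forall i, inRange L i -> sumL L (fun j => x i j) = 1) ->
  kappa G L a x <= INR L * (1/2) + (r - 1/2) * trace L x.
Proof.
  intros Hx Hrow. rewrite <- pairing_half_weight by exact Hrow.
  assert (Hnonneg : forall i j, inRange L i -> inRange L j -> 0 <= half_weight r i j).
  { intros i j _ _. unfold half_weight. destruct (Nat.eqb i j); lra. }
  apply kappa_le_pairing; [exact Hnonneg | | exact Hx].
  apply pairing_disk_ge1; [exact Hnonneg| |].
  - intros i. unfold half_weight. now rewrite Nat.eqb_refl.
  - intros i j i' j' _ _ _ _ Hij Hji. unfold half_weight.
    destruct (Nat.eqb_spec i j), (Nat.eqb_spec i' j'); lia || lra.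
Qed.

Lemma kappa_le_upper_weight x :
  (forall i j, inRange L i -> inRange L j -> 0 <= x i j) ->
  kappa G L a x <= r * trace L x + upper_sum L x.
Proof.
  intros Hx. rewrite <- pairing_upper_weight.
  assert (Hnonneg : forall i j, inRange L i -> inRange L j -> 0 <= upper_weight r i j).
  { intros i j _ _. unfold upper_weight. destruct (Nat.eqb i j), (Nat.ltb i j); lra. }
  apply kappa_le_pairing; [exact Hnonneg | | exact Hx].
  apply pairing_disk_ge1; [exact Hnonneg| |].
  - intros i. unfold upper_weight. now rewrite Nat.eqb_refl.
  - intros i j i' j' _ _ _ _ Hij Hji. unfold upper_weight.
    destruct (Nat.eqb_spec i j), (Nat.eqb_spec i' j'); try lia.
    destruct (Nat.ltb_spec i j), (Nat.ltb_spec i' j'); lia || lra.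
Qed.

End DiskWeights.

Lemma succL_inRange L p : inRange L p -> inRange L (succL L p).
Proof. unfold inRange, succL. destruct (Nat.eqb_spec p L); lia. Qed.

Lemma phi_nonneg L v :
  (forall i j, inRange L i -> inRange L j -> 0 <= v i j) ->
  forall p q, inRange L p -> inRange L q -> 0 <= phi L v p q.
Proof. intros Hv p q Hp Hq. apply Hv; [exact Hq | now apply succL_inRange]. Qed.

Lemma phi_row_sum L v :
  (forall j, inRange L j -> sumL L (fun i => v i j) = 1) ->
  forall p, inRange L p -> sumL L (fun q => phi L v p q) = 1.
Proof. intros Hcol p Hp. apply Hcol. now apply succL_inRange. Qed.

(* The (p, q) entry of phi v is v (q, p+1), so the strictly upper part of phi v consists of
   the entries (q, j) of v with 2 <= j <= q. *)
Lemma upper_sum_phi L v :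
  upper_sum L (phi L v) = sumL L (fun q => sumL L (fun j => if Nat.leb j q then v q j else 0) - v q 1%nat).
Proof.
  unfold upper_sum. rewrite (sumL2_ext L _ (fun p q => if Nat.leb (S p) q then v q (S p) else 0)).
  2:{ intros p q _ Hq. unfold phi, succL. change (Nat.ltb p q) with (Nat.leb (S p) q).
      destruct (Nat.leb_spec (S p) q); [|reflexivity].
      destruct (Nat.eqb_spec p L); [red in Hq; lia | reflexivity]. }
  unfold sumL2. rewrite sumL_comm. apply sumL_ext. intros q Hq. red in Hq.
  pose proof (sumL_shift L (fun j => if Nat.leb j q then v q j else 0)) as Hshift. cbv beta in Hshift.
  destruct (Nat.leb_spec 1 q); [|lia]. destruct (Nat.leb_spec (S L) q); [lia|]. lra.
Qed.

Lemma upper_sum_add_upper_sum_phi L v : (1 <= L)%nat -> in_V L v ->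
  upper_sum L v + upper_sum L (phi L v) = INR L - 1.
Proof.
  intros HL [_ [Hcol Hrow]]. rewrite upper_sum_phi. unfold upper_sum, sumL2.
  rewrite <- sumL_plus, (sumL_ext L _ (fun i => 1 + (-1) * v i 1%nat)).
  - rewrite sumL_plus, sumL_mult_l, sumL_const, Hcol by (red; lia). lra.
  - intros i Hi. rewrite <- (Hrow i Hi).
    enough (sumL L (fun j => v i j) = sumL L (fun j => if Nat.ltb i j then v i j else 0)
                                      + sumL L (fun j => if Nat.leb j i then v i j else 0)) by lra.
    rewrite <- sumL_plus. apply sumL_ext. intros j _.
    destruct (Nat.ltb_spec i j), (Nat.leb_spec j i); lia || lra.
Qed.

Theorem mainTheorem6 (A B : Group) (L : nat) (a : nat -> A) (b : nat -> B)
  (HL : (1 <= L)%nat)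
  (Ha : forall i, inRange L i -> a i <> gone A)
  (Hb : forall i, inRange L i -> b i <> gone B)
  (v : nat -> nat -> R) (Hv : in_V L v) :
  kappa A L a v + kappa B L b (phi L v) <= INR L - 1 + 2 * recipN (Nmin A B L a b).
Proof.
  pose proof (recipN_Nmin_le_half A B L a b Ha Hb) as Hr.
  set (r := recipN (Nmin A B L a b)) in *.
  assert (HrA : forall i k, inRange L i -> (0 < k)%nat -> gpow A (a i) k = gone A -> 1 <= INR k * r).
  { intros i k Hi. apply one_le_mul_recipN_Nmin. apply In_Nmin_orders. left. eauto. }
  assert (HrB : forall i k, inRange L i -> (0 < k)%nat -> gpow B (b i) k = gone B -> 1 <= INR k * r).
  { intros i k Hi. apply one_le_mul_recipN_Nmin. apply In_Nmin_orders. right. eauto. }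
  pose proof (upper_sum_add_upper_sum_phi L v HL Hv) as Hupper.
  destruct Hv as [Hv [Hcol Hrow]].
  pose proof (phi_nonneg L v Hv) as Hphi. pose proof (phi_row_sum L v Hcol) as Hphi_row.
  pose proof (kappa_le_half_weight A L a r HrA (proj1 Hr) v Hv Hrow).
  pose proof (kappa_le_upper_weight A L a r HrA (proj1 Hr) v Hv).
  pose proof (kappa_le_half_weight B L b r HrB (proj1 Hr) (phi L v) Hphi Hphi_row).
  pose proof (kappa_le_upper_weight B L b r HrB (proj1 Hr) (phi L v) Hphi).
  assert (0 <= trace L v) by (apply sumL_nonneg; intros i Hi; now apply Hv).
  assert (0 <= trace L (phi L v)) by (apply sumL_nonneg; intros i Hi; now apply Hphi).
  destruct (Rle_lt_dec (trace L v + trace L (phi L v)) 2); nra.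
Qed.
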